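(* Let $\ell$ be a positive integer, let $G$ be a graph, let $P$ be a path in $G$ with endvertices $u,v$, and let $(Q_1,\ldots,Q_r)$ be a tuple of $P$-paths in $G$, where $u_i,v_i$ denote the endvertices of $Q_i$ with $u_i<_Pv_i$, such that: (E1$'$) if $|i-j|>1$ then $Q_i$ and $Q_j$ are internally disjoint; (E2) the cycle $u_iPv_i\cup Q_i$ is short for every $i$; (E3) $u_1=u$ and $v_r=v$; (E4) $u_i<_Pu_{i+1}<_Pv_i<_Pv_{i+1}$ for $i=1,\ldots,r-1$. If every long cycle in $G$ has length at least $2\ell$, then there is a short path between $u$ and $v$ that is contained in $P\cup\bigcup_{j=1}^{r}Q_j$.
   Context: A path or cycle is short if its length (number of edges) is less than $\ell$; a cycle is long if its length is at least $\ell$. For a path $P$ with endvertices $u,v$, $\le_P$ denotes the total order on $V(P)$ given by distance from $u$ along $P$, and $xPy$ denotes the subpath of $P$ between $x,y\in V(P)$. For a subgraph $H$, an $H$-path is a path with two distinct endvertices in $H$ that is internally disjoint from $H$; a path of length $1$ between two vertices of $H$ is an $H$-path only if its edge is not in $E(H)$. *)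

(* A finite simple graph is a symmetric irreflexive relation
   e on a finType T; paths and cycles are vertex sequences. *)
From mathcomp Require Import all_boot.
Set Implicit Arguments. Unset Strict Implicit. Unset Printing Implicit Defensive.

Section Graphs.
Variables (T : finType) (e : rel T).

Definition is_path (p : seq T) : bool :=
  if p is x :: q then uniq p && path e x q else false.

Definition plen (p : seq T) : nat := (size p).-1.

Definition from_to (p : seq T) (a b : T) : bool :=
  if p is x :: q then (x == a) && (last x q == b) else false.

Definition has_ends (p : seq T) (a b : T) : bool := from_to p a b || from_to p b a.

Definition inner (p : seq T) : seq T :=
  if p is x :: q then behead (belast x q) else [::].

Definition pedge (p : seq T) (x y : T) : bool :=
  ((x, y) \in zip p (behead p)) || ((y, x) \in zip p (behead p)).

Definition is_Ppath (P Q : seq T) : bool :=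
  if Q is x :: q then
    [&& is_path Q, x \in P, last x q \in P, x != last x q,
        all (fun y => y \notin P) (inner Q) &
        (plen Q == 1) ==> ~~ pedge P x (last x q)]
  else false.

Definition int_disjoint (A B : seq T) : bool :=
  all (fun y => y \notin B) (inner A) && all (fun y => y \notin A) (inner B).

(* a cycle: at least 3 distinct vertices, cyclically adjacent; its length is size c *)
Definition is_cycle (c : seq T) : bool := [&& uniq c, 2 < size c & cycle e c].

End Graphs.

From mathcomp Require Import all_boot zify.
Set Implicit Arguments. Unset Strict Implicit. Unset Printing Implicit Defensive.

(* Each ear Q_i closes a short cycle C_i with the segment u_i P v_i.  By induction on i we
   find a short cycle D_i in P + Q_1 + ... + Q_r through u = u_1 and v_i which also contains
   the predecessor p_i of v_i on P, and whose vertices on P all lie at or before v_i.  By (E4)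
   both v_i and p_i lie on C_(i+1), whereas v_(i+1) does not lie on D_i.  Let a and b be the
   first and last vertices of C_(i+1) - v_(i+1) on D_i: the arc of D_i from a to b through u,
   closed up by the part of C_(i+1) from b to a through v_(i+1), is a cycle D_(i+1) with
   |D_(i+1)| + 2 <= |D_i| + |C_(i+1)| < 2l, as v_i and p_i are counted twice.  Since no cycle
   has length in [l, 2l), D_(i+1) is short.  Finally an arc of D_r from u to v is a short
   u-v path. *)

Section SeqSurgery.
Variable T : eqType.
Implicit Types s t : seq T.

Lemma has_split_first (p : pred T) s : has p s ->
  exists s1 a s2, [/\ s = s1 ++ a :: s2, p a & all (predC p) s1].
Proof.
elim: s => [|x s IH] //=; case: (boolP (p x)) => px /=.
  by move=> _; exists [::], x, s.
move=> /IH [s1 [a [s2 [-> pa s1p]]]]; exists (x :: s1), a, s2.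
by rewrite /= px s1p.
Qed.

Lemma has_split_last (p : pred T) s : has p s ->
  exists s1 a s2, [/\ s = s1 ++ a :: s2, p a & all (predC p) s2].
Proof.
rewrite -has_rev => /has_split_first [s1 [a [s2 [Es pa s1p]]]].
exists (rev s2), a, (rev s1); split; rewrite ?all_rev //.
by rewrite -(revK s) Es rev_cat rev_cons cat_rcons.
Qed.

Lemma has_split_outer (p : pred T) s x y :
  x \in s -> y \in s -> p x -> p y -> x != y ->
  exists s1 a s2 b s3, [/\ s = s1 ++ a :: s2 ++ b :: s3, p a, p b,
                          all (predC p) s1 & all (predC p) s3].
Proof.
move=> xs ys px py xy.
have /has_split_first [s1 [a [s' [Es pa s1p]]]] : has p s by apply/hasP; exists x.
have in_tail z : z \in s -> p z -> z \in a :: s'.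
  rewrite Es mem_cat => /orP [zs1 pz|//].
  by have := allP s1p z zs1; rewrite /= pz.
have /has_split_last [s2 [b [s3 [Es' pb s3p]]]] : has p s'.
  case: (eqVneq x a) => [xa|xa].
  - apply/hasP; exists y => //.
    by have := in_tail y ys py; rewrite inE -xa eq_sym (negbTE xy).
  - apply/hasP; exists x => //.
    by have := in_tail x xs px; rewrite inE (negbTE xa).
by exists s1, a, s2, b, s3; rewrite Es Es'.
Qed.

Lemma index_mid s1 t s2 z : uniq (s1 ++ t ++ s2) -> z \in t ->
  index z (s1 ++ t ++ s2) = size s1 + index z t.
Proof.
rewrite cat_uniq => /and3P [_ dis _] zt.
have zs1 : z \notin s1 by apply: contra dis => zs1; apply/hasP; exists z; rewrite // mem_cat zt.
by rewrite index_cat (negbTE zs1) index_cat zt.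
Qed.

Lemma mem_mid s1 t s2 z : uniq (s1 ++ t ++ s2) -> z \in s1 ++ t ++ s2 ->
  (z \in t) = (size s1 <= index z (s1 ++ t ++ s2) < size s1 + size t).
Proof.
move=> uniq_s; case: (boolP (z \in t)) => [zt _|zt].
  by rewrite index_mid // leq_addr ltn_add2l index_mem.
rewrite index_cat mem_cat; case: ifP => [zs1 _|_ /=].
  by rewrite leqNgt index_mem zs1.
by move=> _; rewrite index_cat (negbTE zt) ltn_add2l ltnNge !leq_addr.
Qed.

Lemma index_rcons_notin t y : y \notin t -> index y (rcons t y) = size t.
Proof. by move=> yt; rewrite -cats1 index_cat (negbTE yt) /= eqxx addn0. Qed.

Lemma index_rcons_mem t y z : z \in t -> index z (rcons t y) = index z t.
Proof. by move=> zt; rewrite -cats1 index_cat zt. Qed.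

Lemma uniq_segment s x y : uniq s -> x \in s -> y \in s -> index x s < index y s ->
  exists m, [/\ infix (x :: rcons m y) s, index y s = index x s + (size m).+1,
     (index (last x m) s).+1 = index y s &
     {in s, forall z, (z \in x :: rcons m y) = (index x s <= index z s <= index y s)}].
Proof.
move=> uniq_s xs ys ltxy.
have [s1 [m [s2 Es]]] : exists s1 m s2, s = s1 ++ (x :: rcons m y) ++ s2.
  case/splitPr: xs uniq_s ltxy ys => s1 s' uniq_s.
  have xs1 : x \notin s1 by move: uniq_s; rewrite cat_uniq /= => /and4P [_ /norP []].
  rewrite !index_cat (negbTE xs1) /= eqxx addn0 mem_cat inE.
  case: ifP => [ys1|_]; first by rewrite ltnNge ltnW ?index_mem.
  case: (eqVneq x y) => [<-|xy]; first by rewrite addn0 ltnn.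
  move=> _ /=; case/splitPr=> m s2; exists s1, m, s2.
  by rewrite cat_rcons.
have uniq_seg : uniq (x :: rcons m y) by move: uniq_s; rewrite Es !cat_uniq => /and4P [].
have y_notin : y \notin x :: m by move: uniq_seg; rewrite -rcons_cons rcons_uniq => /andP [].
have uniq_cat : uniq (s1 ++ (x :: rcons m y) ++ s2) by rewrite -Es.
have ix : index x s = size s1 by rewrite Es index_mid ?mem_head //= eqxx addn0.
have iy : index y s = size s1 + (size m).+1.
  have y_in : y \in x :: rcons m y by rewrite -rcons_cons mem_rcons mem_head.
  by rewrite Es index_mid // -rcons_cons index_rcons_notin.
exists m; split.
- by rewrite Es infix_infix.
- by rewrite ix iy.
- have uniq_xm : uniq (x :: m) by move: uniq_seg; rewrite -rcons_cons rcons_uniq => /andP [].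
  have last_in : last x m \in x :: rcons m y.
    by rewrite -rcons_cons mem_rcons inE mem_last orbT.
  rewrite iy Es index_mid // -rcons_cons index_rcons_mem ?mem_last //.
  by rewrite index_last // addnS.
- move=> z; rewrite {1}Es => zs.
  by rewrite (mem_mid uniq_cat zs) -Es ix iy /= size_rcons !addnS ltnS.
Qed.

Lemma zip_behead_catl s1 s2 :
  {subset zip s2 (behead s2) <= zip (s1 ++ s2) (behead (s1 ++ s2))}.
Proof.
elim: s1 => [|a s1 IH] // xy /IH /=; case: (s1 ++ s2) => [|b t] //= xys.
by rewrite inE xys orbT.
Qed.

Lemma zip_meml s1 s2 x y : (x, y) \in zip s1 s2 -> x \in s1.
Proof.
elim: s1 s2 => [|a s1 IH] [|b s2] //=; rewrite !inE.
by case/orP=> [/eqP [-> _]|/IH ->]; rewrite ?eqxx ?orbT.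
Qed.

Lemma zip_memr s1 s2 x y : (x, y) \in zip s1 s2 -> y \in s2.
Proof.
elim: s1 s2 => [|a s1 IH] [|b s2] //=; rewrite !inE.
by case/orP=> [/eqP [_ ->]|/IH ->]; rewrite ?eqxx ?orbT.
Qed.

Lemma path_all_zip (f : rel T) x s : path f x s -> all (fun xy => f xy.1 xy.2) (zip (x :: s) s).
Proof. by elim: s x => [|y s IH] x //= /andP [-> /IH]. Qed.

End SeqSurgery.

Section CycleSurgery.
Variables (T : eqType) (e : rel T).
Hypothesis e_sym : symmetric e.

Lemma rev_path_sym x w : path e x w -> path e (last x w) (rev (belast x w)).
Proof. by rewrite rev_path; apply: sub_path => a b; rewrite /= e_sym. Qed.

Lemma cycle_prefix_arc a w1 b w2 : uniq (a :: w1 ++ b :: w2) -> cycle e (a :: w1 ++ b :: w2) ->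
  uniq (a :: rcons w1 b) /\ path e a (rcons w1 b).
Proof.
move=> uniq_c cyc_c; split.
  by apply: subseq_uniq uniq_c; rewrite -cat_rcons -cat_cons prefix_subseq.
rewrite rcons_path; move: cyc_c; rewrite /= rcons_cat cat_path /=.
by case/and3P=> -> ->.
Qed.

Lemma cycle_arc D a b z : uniq D -> cycle e D -> a \in D -> b \in D -> a != b -> z \in D ->
  exists t, [/\ path e a t, last a t = b, uniq (a :: t), {subset a :: t <= D} & z \in a :: t].
Proof.
move=> uniq_D cyc_D aD bD ab zD.
case: (rot_to aD) => i w Dw.
have memD y : (y \in D) = (y \in a :: w) by rewrite -Dw mem_rot.
have bw : b \in w by move: bD; rewrite memD inE eq_sym (negbTE ab).
case: (splitPr bw) Dw memD => w1 w2 Dw memD.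
have uniq_c : uniq (a :: w1 ++ b :: w2) by rewrite -Dw rot_uniq.
have cyc_c : cycle e (a :: w1 ++ b :: w2) by rewrite -Dw rot_cycle.
case: (boolP (z \in a :: rcons w1 b)) => z_front.
  have [uniq_t path_t] := cycle_prefix_arc uniq_c cyc_c.
  exists (rcons w1 b); split; rewrite ?last_rcons // => y.
  by rewrite memD -cat_rcons -cat_cons mem_cat => ->.
have rot_c : rot (size (a :: w1)) (a :: w1 ++ b :: w2) = b :: w2 ++ a :: w1.
  by rewrite -cat_cons rot_size_cat.
have uniq_c' : uniq (b :: w2 ++ a :: w1) by rewrite -rot_c rot_uniq.
have cyc_c' : cycle e (b :: w2 ++ a :: w1) by rewrite -rot_c rot_cycle.
have [uniq_t path_t] := cycle_prefix_arc uniq_c' cyc_c'.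
exists (rcons (rev w2) b); split.
- by move: (rev_path_sym path_t); rewrite last_rcons belast_rcons rev_cons.
- by rewrite last_rcons.
- by rewrite -rcons_cons -rev_rcons -rev_cons rev_uniq.
- move=> y; rewrite -rcons_cons -rev_rcons -rev_cons mem_rev memD.
  have mem_c' : y \in b :: rcons w2 a -> y \in rot (size (a :: w1)) (a :: w1 ++ b :: w2).
    by rewrite rot_c -cat_rcons -cat_cons mem_cat => ->.
  by rewrite mem_rot in mem_c'.
- move: zD z_front; rewrite memD -cat_rcons -cat_cons mem_cat => /orP [->//|z_back] _.
  by rewrite -rcons_cons mem_rcons !inE mem_rev z_back !orbT.
Qed.

Lemma merge_cycles D v s z x y : uniq D -> cycle e D -> uniq (v :: s) -> cycle e (v :: s) ->
  v \notin D -> z \in D -> x \in s -> y \in s -> x \in D -> y \in D -> x != y ->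
  exists X, [/\ uniq X, cycle e X, 2 < size X, [/\ z \in X, v \in X & last v s \in X] &
    {subset X <= [predU D & v :: s]}].
Proof.
move=> uniq_D cyc_D uniq_C cyc_C vD zD xs ys xD yD xy.
have [s1 [a [s2 [b [s3 [Es aD bD s1D s3D]]]]]] :=
  has_split_outer (p := fun w => w \in D) xs ys xD yD xy.
subst s.
have ab : a != b.
  apply: contraTneq uniq_C => <-.
  by rewrite /= !cat_uniq /= [a \in s2 ++ _]mem_cat mem_head orbT !andbF.
have [t [path_t last_t uniq_t t_sub zt]] := cycle_arc uniq_D cyc_D aD bD ab zD.
have t_nil : 0 < size t by rewrite lt0n size_eq0; apply: contraNneq ab => t0; rewrite -last_t t0.
have outD w : w \in s3 ++ v :: s1 -> w \notin D.
  rewrite mem_cat inE => /or3P [ws3|/eqP->//|ws1].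
  - exact: (allP s3D w ws3).
  - exact: (allP s1D w ws1).
(* Along D from a to b through z, then back from b to a along C through v. *)
exists ((a :: t) ++ s3 ++ v :: s1); split.
- rewrite cat_uniq uniq_t; apply/and3P; split => //.
    by apply/hasPn => w /outD; apply: contra => /t_sub.
  rewrite uniq_catC; apply: subseq_uniq uniq_C.
  rewrite -cat_cons cat_subseq // -cat_rcons -cat_cons; exact: suffix_subseq.
- rewrite /= rcons_cat cat_path path_t last_t /=.
  rewrite rcons_cat cat_path /= rcons_path.
  move: cyc_C; rewrite /= rcons_cat cat_path /= rcons_cat cat_path /= rcons_path.
  by case/and5P=> -> -> _ _ /andP [-> ->].
- by rewrite !size_cat /= addSn !addnS !ltnS addn_gt0 t_nil.
- split.
  + by rewrite mem_cat zt.
  + by rewrite !(mem_cat, inE) eqxx !orbT.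
  + have bt : b \in a :: t by rewrite -last_t mem_last.
    rewrite last_cat /= last_cat /=; move: (mem_last b s3); rewrite inE.
    by case/orP=> [/eqP->|w3]; rewrite -cat_cons mem_cat ?bt // mem_cat w3 orbT.
- move=> w; rewrite mem_cat => /orP [/t_sub wD|]; first by rewrite inE wD.
  by rewrite !(inE, mem_cat) => /or3P [->|->|->]; rewrite !orbT.
Qed.

End CycleSurgery.

Lemma uniq_size_union_le (T : finType) (X D C : seq T) x y : uniq X ->
  {subset X <= [predU D & C]} -> x \in D -> x \in C -> y \in D -> y \in C -> x != y ->
  size X + 2 <= size D + size C.
Proof.
move=> uniq_X X_sub xD xC yD yC xy.
have X_le : size X <= #|[predU D & C]| by apply/card_geqP; exists X.
have two_le : 2 <= #|[predI D & C]|.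
  apply/card_geqP; exists [:: x; y]; split; rewrite /= ?inE ?xy //.
  by move=> z; rewrite !inE => /orP [] /eqP ->; apply/andP.
have := cardUI (mem D) (mem C); have := card_size D; have := card_size C.
move: X_le two_le; move: #|[predU D & C]| #|[predI D & C]| #|D| #|C| => ? ? ? ?; lia.
Qed.

Section Subgraphs.
Variables (T : finType) (e : rel T).
Implicit Types W : seq T.

Lemma pedgeC W x y : pedge W x y = pedge W y x.
Proof. by rewrite /pedge orbC. Qed.

Lemma pedge_catl W1 W2 x y : pedge W2 x y -> pedge (W1 ++ W2) x y.
Proof. by rewrite /pedge => /orP [] /zip_behead_catl ->; rewrite ?orbT. Qed.

Lemma sorted_pedge W : sorted (pedge W) W.
Proof.
suff infix_path W1 x p : path (pedge (W1 ++ x :: p)) x p.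
  by case: W => // x p; apply: (infix_path [::]).
elim: p x W1 => [|y p IH] x W1 //=; apply/andP; split.
  by apply: pedge_catl; rewrite /pedge /= inE eqxx.
by rewrite -cat_rcons; apply: IH.
Qed.

Lemma pedge_meml W x y : pedge W x y -> x \in W.
Proof. by case/orP=> [/zip_meml //|/zip_memr /mem_behead]. Qed.

Lemma is_path_uniq_sorted W : is_path e W -> uniq W /\ sorted e W.
Proof. by case: W => // x W /andP []. Qed.

Definition span_rel (E : seq (seq T)) : rel T :=
  fun x y => e x y && has (fun W => pedge W x y) E.

Lemma span_rel_e E : subrel (span_rel E) e.
Proof. by move=> x y /andP []. Qed.

Lemma span_rel_sub E E' : {subset E <= E'} -> subrel (span_rel E) (span_rel E').
Proof.
move=> EE' x y /andP [exy /hasP [W WE Wxy]].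
by rewrite /span_rel exy; apply/hasP; exists W; rewrite ?EE'.
Qed.

Lemma span_rel_sym E : symmetric e -> symmetric (span_rel E).
Proof.
move=> e_sym x y; rewrite /span_rel e_sym; congr (_ && _).
by apply: eq_has => W; rewrite pedgeC.
Qed.

Lemma sorted_span E W : W \in E -> sorted e W -> sorted (span_rel E) W.
Proof.
move=> WE sorted_W; have : sorted [rel x y | e x y && pedge W x y] W.
  by rewrite sorted_relI sorted_W sorted_pedge.
apply: sub_sorted => x y /andP [exy Wxy].
by rewrite /span_rel exy; apply/hasP; exists W.
Qed.

Lemma path_span_cover E x s : path (span_rel E) x s -> s != [::] ->
  all (fun z => has (fun W => z \in W) E) (x :: s).
Proof.
elim: s x => [|y s IH] x //= /andP [/andP [_ /hasP [W WE Wxy]] path_s] _.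
apply/andP; split; first by apply/hasP; exists W; rewrite // (pedge_meml Wxy).
case: s IH path_s => [|z s] IH path_s; last exact: IH.
by rewrite /= andbT; apply/hasP; exists W; rewrite // (pedge_meml (y := x)) // pedgeC.
Qed.

Lemma has_ends_orient (f : rel T) W a b : symmetric f -> sorted f W -> has_ends W a b -> a != b ->
  exists m, [/\ sorted f (b :: rcons m a), perm_eq (b :: rcons m a) W & {subset m <= inner W}].
Proof.
move=> f_sym; case: W => [|w q] // sorted_W; rewrite /has_ends /from_to.
case/orP=> /andP [/eqP w_end /eqP q_last] ab; subst w.
all: case/lastP: q sorted_W q_last => [|m c] sorted_W; rewrite ?last_rcons => c_end.
all: try by move: ab; rewrite -c_end /= eqxx.
- subst b; exists (rev m); split.
  + rewrite -rcons_cons -rev_rcons -rev_cons rev_sorted.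
    by apply: sub_sorted sorted_W => x y; rewrite /= f_sym.
  + by rewrite -rcons_cons -rev_rcons -rev_cons perm_rev.
  + by move=> z; rewrite mem_rev /inner belast_rcons.
- by exists m; rewrite -c_end perm_refl; split => // z; rewrite /inner belast_rcons.
Qed.

End Subgraphs.

Section EarCycle.
Variables (T : finType) (e : rel T) (P : seq T).
Hypothesis e_sym : symmetric e.
Hypothesis P_path : is_path e P.

Lemma is_Ppath_ends W a b : is_Ppath e P W -> has_ends W a b ->
  [/\ is_path e W, a \in P, b \in P & {in inner W, forall z, z \notin P}].
Proof.
case: W => // x q /and5P [W_path xP last_P _ /andP [inner_P _]] /orP [] /andP [/eqP <- /eqP <-].
  by split=> // z; apply: (allP inner_P).
by split=> // z; apply: (allP inner_P).
Qed.

Lemma ear_cycle W a b : is_Ppath e P W -> has_ends W a b -> index a P < index b P ->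
  exists s, [/\ uniq (b :: s), cycle (span_rel e [:: P; W]) (b :: s),
    size (b :: s) = index b P - index a P + plen W,
    (index (last b s) P).+1 = index b P &
    {in P, forall z, (z \in b :: s) = (index a P <= index z P <= index b P)}].
Proof.
move=> W_ear W_ends lt_ab.
have [W_path aP bP inner_P] := is_Ppath_ends W_ear W_ends.
have [uniq_W sorted_W] := is_path_uniq_sorted W_path.
have [uniq_P sorted_P] := is_path_uniq_sorted P_path.
have ab : a != b by apply: contraTneq lt_ab => ->; rewrite ltnn.
set G := span_rel e [:: P; W].
have G_sym : symmetric G by apply: span_rel_sym.
have W_in : W \in [:: P; W] by rewrite !inE eqxx orbT.
have [m [sorted_m perm_m m_inner]] := has_ends_orient G_sym (sorted_span W_in sorted_W) W_ends ab.
have [S [S_infix iSb iSlast S_mem]] := uniq_segment uniq_P aP bP lt_ab.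
have sorted_S : sorted G (a :: rcons S b).
  exact: infix_sorted S_infix (sorted_span (mem_head P [:: W]) sorted_P).
have m_P z : z \in m -> z \notin P by move=> /m_inner; apply: inner_P.
have uniq_m : uniq m.
  have : uniq (b :: rcons m a) by rewrite (perm_uniq perm_m).
  by rewrite cons_uniq rcons_uniq => /and3P [].
exists (m ++ a :: S); split.
- rewrite -rotr1_rcons rotr_uniq rcons_cat cat_uniq uniq_m (infix_uniq S_infix uniq_P) andbT.
  apply/hasPn => z /(mem_subseq (infixW S_infix)); apply: contraL; exact: m_P.
- rewrite /= rcons_cat cat_path /=; move: sorted_m; rewrite /= rcons_path => /andP [-> ->].
  exact: sorted_S.
- rewrite iSb addKn /plen -(perm_size perm_m) /= size_cat size_rcons /=.
  by rewrite addnC addnS.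
- by rewrite last_cat.
- move=> z zP; rewrite -S_mem //; have zm : z \notin m := contraL (m_P z) zP.
  by rewrite !inE mem_cat (negbTE zm) mem_rcons inE /= orbCA.
Qed.

End EarCycle.

Section Ears.
Variables (T : finType) (e : rel T) (l r : nat) (P : seq T) (Q : nat -> seq T) (us vs : nat -> T).
Hypothesis e_sym : symmetric e.
Hypothesis P_path : is_path e P.
Hypothesis ears : forall i, 1 <= i <= r ->
  [/\ is_Ppath e P (Q i), has_ends (Q i) (us i) (vs i) & index (us i) P < index (vs i) P].
Hypothesis ears_short : forall i, 1 <= i <= r ->
  (index (vs i) P - index (us i) P) + plen (Q i) < l.
Hypothesis ears_interlace : forall i, 1 <= i < r ->
  [/\ index (us i) P < index (us i.+1) P, index (us i.+1) P < index (vs i) P &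
      index (vs i) P < index (vs i.+1) P].
Hypothesis long_cycles_double : forall c, is_cycle e c -> l <= size c -> 2 * l <= size c.

Local Notation idx z := (index z P).
Local Notation G := (span_rel e (P :: map Q (iota 1 r))).

Lemma ear_ends_in_P i : 1 <= i <= r -> us i \in P /\ vs i \in P.
Proof. by case/ears=> /is_Ppath_ends W_ends /W_ends []. Qed.

Lemma short_ear_cycle i : 1 <= i <= r -> exists s,
  [/\ uniq (vs i :: s), cycle G (vs i :: s), size (vs i :: s) < l,
      last (vs i) s \in P /\ (idx (last (vs i) s)).+1 = idx (vs i) &
      {in P, forall z, (z \in vs i :: s) = (idx (us i) <= idx z <= idx (vs i))}].
Proof.
move=> hi; have [Q_ear Q_ends lt_uv] := ears hi.
have [s [uniq_C cyc_C size_C ilast C_mem]] := ear_cycle e_sym P_path Q_ear Q_ends lt_uv.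
exists s; split=> //.
- apply: sub_cycle cyc_C; apply: span_rel_sub => W; rewrite !inE => /orP [->//|/eqP ->].
  by rewrite map_f ?orbT // mem_iota add1n ltnS.
- by rewrite size_C ears_short.
- have [_ viP] := ear_ends_in_P hi.
  by rewrite -index_mem -ltnS ilast ltnS ltnW ?index_mem.
Qed.

(* p is the predecessor of v_i on P; together with v_i it lies on the next ear cycle. *)
Definition short_cycle_upto i := exists D p, [/\ uniq D, cycle G D, size D < l,
  [/\ us 1 \in D, vs i \in D & p \in D] &
  [/\ p \in P, (idx p).+1 = idx (vs i) & {in P, forall z, z \in D -> idx z <= idx (vs i)}]].

Lemma short_cycle_upto1 : 0 < r -> short_cycle_upto 1.
Proof.
move=> r_pos; have h1 : 1 <= 1 <= r by rewrite leqnn r_pos.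
have [s [uniq_C cyc_C size_C [last_P ilast] C_mem]] := short_ear_cycle h1.
have [u1P _] := ear_ends_in_P h1; have [_ _ lt_uv] := ears h1.
exists (vs 1 :: s), (last (vs 1) s); split=> //; split; rewrite ?mem_head ?mem_last //.
- by rewrite C_mem // leqnn ltnW.
- by move=> z zP; rewrite C_mem // => /andP [].
Qed.

Lemma short_cycle_upto_step i : 1 <= i < r -> short_cycle_upto i -> short_cycle_upto i.+1.
Proof.
move=> hi [D [p [uniq_D cyc_D size_D [u1D viD pD] [pP ip D_le]]]].
have hi0 : 1 <= i <= r by case/andP: hi => -> /ltnW.
have hi1 : 1 <= i.+1 <= r by case/andP: hi => _ ->.
have [s [uniq_C cyc_C size_C [last_P ilast] C_mem]] := short_ear_cycle hi1.
have [_ lt_uv lt_v] := ears_interlace hi.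
have [_ viP] := ear_ends_in_P hi0; have [_ vi1P] := ear_ends_in_P hi1.
have vD : vs i.+1 \notin D by apply/negP => /(D_le _ vi1P); rewrite leqNgt lt_v.
have vi_C : vs i \in vs i.+1 :: s by rewrite C_mem // (ltnW lt_uv) (ltnW lt_v).
have vi_s : vs i \in s.
  by move: vi_C; rewrite inE => /orP [/eqP vi_eq|//]; rewrite vi_eq ltnn in lt_v.
have p_lt : idx p < idx (vs i) by rewrite -ip.
have up_le : idx (us i.+1) <= idx p by rewrite -ltnS ip.
have p_C : p \in vs i.+1 :: s by rewrite C_mem // up_le ltnW // (ltn_trans p_lt lt_v).
have p_s : p \in s.
  by move: p_C; rewrite inE => /orP [/eqP p_eq|//]; move: (ltn_trans p_lt lt_v); rewrite p_eq ltnn.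
have vi_p : vs i != p by apply: contraTneq p_lt => ->; rewrite ltnn.
have [X [uniq_X cyc_X size_X [u1X vX lastX] X_sub]] :=
  merge_cycles (span_rel_sym _ e_sym) uniq_D cyc_D uniq_C cyc_C vD u1D vi_s p_s viD pD vi_p.
exists X, (last (vs i.+1) s); split=> //.
- rewrite ltnNge; apply/negP => long_X.
  have X_cycle : is_cycle e X.
    by rewrite /is_cycle uniq_X size_X (sub_cycle (@span_rel_e _ _ _) cyc_X).
  have := long_cycles_double X_cycle long_X.
  have := uniq_size_union_le uniq_X X_sub viD vi_C pD p_C vi_p.
  move: size_D size_C; move: (size X) (size D) (size (vs i.+1 :: s)) => x d c; clear; lia.
- split=> // z zP /X_sub; rewrite inE => /orP [/(D_le _ zP) z_le|].
    exact: leq_trans z_le (ltnW lt_v).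
  by rewrite C_mem // => /andP [].
Qed.

Lemma short_cycle_upto_all i : 0 < r -> 1 <= i <= r -> short_cycle_upto i.
Proof.
move=> r_pos; elim: i => [//|[|i] IH hi]; first exact: short_cycle_upto1.
have hi' : 1 <= i.+1 < r by case/andP: hi.
by apply: (short_cycle_upto_step hi'); apply: IH; case/andP: hi' => -> /ltnW.
Qed.

Lemma index_vs1_le i : 1 <= i <= r -> idx (vs 1) <= idx (vs i).
Proof.
elim: i => [//|[//|i] IH] /andP [_ hi].
have [_ _ lt_v] := ears_interlace (hi : 1 <= i.+1 < r).
exact: leq_trans (IH (ltnW hi)) (ltnW lt_v).
Qed.

Lemma short_ear_path : 0 < r -> exists R,
  [/\ path G (us 1) R, last (us 1) R = vs r, uniq (us 1 :: R), size R < l &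
      all (fun z => has (fun W : seq T => z \in W) (P :: map Q (iota 1 r))) (us 1 :: R)].
Proof.
move=> r_pos; have hr : 1 <= r <= r by rewrite r_pos leqnn.
have [D [_ [uniq_D cyc_D size_D [u1D vrD _] _]]] := short_cycle_upto_all r_pos hr.
have u1_vr : us 1 != vs r.
  have [_ _ lt_uv] := ears (r_pos : 1 <= 1 <= r).
  by apply: contraTneq (index_vs1_le hr) => <-; rewrite -ltnNge.
have [R [R_path R_last R_uniq R_sub _]] :=
  cycle_arc (span_rel_sym _ e_sym) uniq_D cyc_D u1D vrD u1_vr u1D.
exists R; split=> //.
- exact: ltn_trans (uniq_leq_size R_uniq R_sub) size_D.
- apply: (path_span_cover R_path); apply: contraNneq u1_vr => R_nil.
  by rewrite -R_last R_nil.
Qed.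

End Ears.

Theorem lemma4 (T : finType) (e : rel T) (e_sym : symmetric e) (e_irr : irreflexive e)
  (l : nat) (l_pos : 0 < l)
  (P : seq T) (u v : T) (r : nat) (Q : nat -> seq T) (us vs : nat -> T) :
  is_path e P -> from_to P u v ->
  0 < r ->
  (* each Q_i is a P-path with endvertices u_i, v_i, u_i <_P v_i *)
  (forall i, 1 <= i <= r ->
     [/\ is_Ppath e P (Q i), has_ends (Q i) (us i) (vs i) &
         index (us i) P < index (vs i) P]) ->
  (* (E1') *)
  (forall i j, 1 <= i <= r -> 1 <= j <= r -> (1 < i - j) || (1 < j - i) ->
     int_disjoint (Q i) (Q j)) ->
  (* (E2): the cycle u_i P v_i + Q_i is short *)
  (forall i, 1 <= i <= r ->
     (index (vs i) P - index (us i) P) + plen (Q i) < l) ->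
  (* (E3) *)
  us 1 = u -> vs r = v ->
  (* (E4) *)
  (forall i, 1 <= i < r ->
     [/\ index (us i) P < index (us i.+1) P,
         index (us i.+1) P < index (vs i) P &
         index (vs i) P < index (vs i.+1) P]) ->
  (* every long cycle has length at least 2l *)
  (forall c, is_cycle e c -> l <= size c -> 2 * l <= size c) ->
  exists R : seq T,
    [/\ is_path e R, from_to R u v, plen R < l,
        all (fun x => (x \in P) || has (fun j => x \in Q j) (iota 1 r)) R &
        all (fun xy => pedge P xy.1 xy.2 || has (fun j => pedge (Q j) xy.1 xy.2) (iota 1 r))
            (zip R (behead R))].
Proof.
move=> P_path _ r_pos ears _ ears_short <- <- ears_interlace long_cycles_double.
have [R [R_path R_last R_uniq R_size R_cover]] :=
  short_ear_path e_sym P_path ears ears_short ears_interlace long_cycles_double r_pos.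
exists (us 1 :: R); split.
- by rewrite /is_path R_uniq (sub_path (@span_rel_e _ _ _) R_path).
- by rewrite /from_to eqxx R_last eqxx.
- exact: R_size.
- by apply: sub_all R_cover => z; rewrite /= has_map.
- apply: sub_all (path_all_zip R_path) => -[x y] /andP [_].
  by rewrite /= has_map.
Qed.
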